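(* Let $(\mu_n)_{n\ge0}$ be a non-increasing sequence of positive numbers such that $\sum_{n=0}^\infty\mu_n<\infty$. Then the restrictions $H^1_\mu:\ell^1_A\to\ell^1_A$ and $C^1_\mu:\ell^1_A\to\ell^1_A$ of $H_\mu$ and $C_\mu$ are nuclear operators. Moreover, the operator $H_\mu:\ell^\infty_A\to\ell^\infty_A$ satisfies $H_\mu=(H^1_\mu)^*$ and is a compact operator.
   Context: $\ell^p_A$ ($1\le p<\infty$) is the space of $f(z)=\sum_{n\ge0}a_nz^n\in H(\mathbb{D})$ with $\|f\|_p^p=\sum_n|a_n|^p<\infty$, and $\ell^\infty_A$ those with $\|f\|_\infty=\sup_n|a_n|<\infty$; functions are identified with coefficient sequences, so $\ell^\infty_A=(\ell^1_A)^*$ via $\langle x,y\rangle=\sum_nx_ny_n$. $H_\mu:\ell^\infty_A\to\ell^\infty_A$, $H_\mu((a_n)_{n\ge0})=\left(\sum_{n=0}^\infty\mu_{n+k}a_n\right)_{k\ge0}$ and $C_\mu:\ell^\infty_A\to\ell^\infty_A$, $C_\mu((a_n)_{n\ge0})=\left(\mu_k\sum_{n=0}^ka_n\right)_{k\ge0}$. An operator $T:X\to Y$ is nuclear if $T=\sum_nx_n^*(\cdot)y_n$ with $x_n^*\in X^*$, $y_n\in Y$, $\sum_n\|x_n^*\|\|y_n\|<\infty$. *)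

From Stdlib Require Import Reals.
From Coquelicot Require Import Coquelicot.
Open Scope R_scope.

(* Coefficient sequences of f(z) = sum a_n z^n (complex coefficients). *)
Definition seqC := nat -> C.

(* Sum of a complex series, taken componentwise (meaningful when it converges). *)
Definition Cseries (a : seqC) : C :=
  (Series (fun n => fst (a n)), Series (fun n => snd (a n))).

Definition in_l1 (a : seqC) : Prop := ex_series (fun n => Cmod (a n)).
Definition norm1 (a : seqC) : R := Series (fun n => Cmod (a n)).
Definition in_linf (a : seqC) : Prop := exists M, forall n, Cmod (a n) <= M.
Definition norminf (a : seqC) : R := real (Sup_seq (fun n => Finite (Cmod (a n)))).

Definition pairing (x y : seqC) : C := Cseries (fun n => (x n * y n)%C).

Definition Hmu (mu : nat -> R) (a : seqC) : seqC :=
  fun k => Cseries (fun n => (RtoC (mu (n + k)%nat) * a n)%C).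
Definition Cesmu (mu : nat -> R) (a : seqC) : seqC :=
  fun k => (RtoC (mu k) * sum_n a k)%C.

(* T : ell^1_A -> ell^1_A is nuclear: T = sum_n x_n^*(.) y_n with
   x_n^* in (ell^1_A)^* = ell^infty_A (acting by the pairing), y_n in ell^1_A,
   sum_n ||x_n^*|| ||y_n|| < oo, the series converging in ell^1 norm. *)
Definition nuclear_l1 (T : seqC -> seqC) : Prop :=
  exists (x y : nat -> seqC),
    (forall n, in_linf (x n)) /\ (forall n, in_l1 (y n)) /\
    ex_series (fun n => norminf (x n) * norm1 (y n)) /\
    forall a, in_l1 a ->
      in_l1 (T a) /\
      is_lim_seq
        (fun N => norm1 (fun k => (T a k - sum_n (fun n => (pairing a (x n) * y n k)%C) N)%C))
        0.

(* S : ell^infty_A -> ell^infty_A is the adjoint of T : ell^1_A -> ell^1_A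
   under ell^infty_A = (ell^1_A)^*: <T a, b> = <a, S b>. *)
Definition adjoint_l1_linf (T S : seqC -> seqC) : Prop :=
  (forall b, in_linf b -> in_linf (S b)) /\
  forall a b, in_l1 a -> in_linf b -> pairing (T a) b = pairing a (S b).

Definition compact_linf (Op : seqC -> seqC) : Prop :=
  (forall b, in_linf b -> in_linf (Op b)) /\
  forall (b : nat -> seqC) (M : R), (forall j n, Cmod (b j n) <= M) ->
    exists phi : nat -> nat, (forall j, (phi j < phi (S j))%nat) /\
      exists L : seqC, in_linf L /\
        is_lim_seq (fun j => norminf (fun k => (Op (b (phi j)) k - L k)%C)) 0.

(* The k-th rows of the matrices of H_mu and C_mu, namely (mu_{n+k})_n and
   (mu_k [n <= k])_n, are bounded by mu_k; since sum_k mu_k < oo, the expansion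
   T a = sum_k <a, row_k> e_k along the unit vectors e_k is a nuclear representation
   on ell^1.  The duality <H a, b> = <a, H b> is an exchange of summations, justified
   by the domination |mu_{n+k} a_n b_k| <= ||b||_oo |a_n| mu_k.  Finally
   |(H b)_k| <= 2 ||b||_oo sum_{n >= k} mu_n, so H maps bounded sets of ell^oo into a
   box whose sides tend to 0; a diagonal extraction makes finitely many coordinates
   converge while the box makes the remaining ones uniformly small. *)

From Stdlib Require Import Reals Lra Lia.
From Stdlib Require Import ClassicalEpsilon IndefiniteDescription FunctionalExtensionality.
From Coquelicot Require Import Coquelicot.
Open Scope R_scope.

Lemma ex_series_Rabs_le (a b : nat -> R) :
  (forall n, Rabs (a n) <= b n) -> ex_series b -> ex_series a.
Proof. apply (ex_series_le (V := R_CompleteNormedModule)). Qed.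

Lemma ex_series_scal (c : R) (a : nat -> R) :
  ex_series a -> ex_series (fun n => c * a n).
Proof. apply (ex_series_scal_l (V := R_NormedModule)). Qed.

Lemma Series_Rabs_le (u v : nat -> R) :
  (forall n, Rabs (u n) <= v n) -> ex_series v ->
  ex_series u /\ Rabs (Series u) <= Series v.
Proof.
  intros Huv Hv.
  assert (Habs : ex_series (fun n => Rabs (u n))).
  { apply (ex_series_Rabs_le _ v); auto. intro n; rewrite Rabs_Rabsolu; apply Huv. }
  split; [now apply ex_series_Rabs|].
  eapply Rle_trans; [now apply Series_Rabs|].
  apply Series_le; auto. intro n; split; [apply Rabs_pos | apply Huv].
Qed.

Lemma is_lim_seq_Rabs_sub_le (u b : nat -> R) (l : R) :
  (forall n, Rabs (u n - l) <= b n) -> is_lim_seq b 0 -> is_lim_seq u l.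
Proof.
  intros Hub Hb. apply is_lim_seq_spec. intro eps.
  apply is_lim_seq_spec in Hb. specialize (Hb eps).
  revert Hb; apply filter_imp; intros n Hn.
  specialize (Hub n). rewrite Rminus_0_r in Hn.
  pose proof (Rle_abs (b n)). lra.
Qed.

Lemma is_series_finite_support (u : nat -> R) (N : nat) :
  (forall k, (N < k)%nat -> u k = 0) -> is_series u (sum_n u N).
Proof.
  intro Hu. enough (H : is_lim_seq (sum_n u) (sum_n u N)) by exact H.
  apply (is_lim_seq_incr_n _ N).
  eapply is_lim_seq_ext; [|apply is_lim_seq_const].
  intro M; cbn beta. induction M as [|M IH]; [reflexivity|].
  rewrite IH; simpl (S M + N)%nat.
  rewrite sum_Sn, (Hu (S (M + N))) by lia.
  symmetry; apply Rplus_0_r.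
Qed.

Definition drop_upto (u : nat -> R) (K : nat) : nat -> R :=
  fun k => if (k <=? K)%nat then 0 else u k.

Lemma is_series_drop_upto (u : nat -> R) (K : nat) :
  ex_series u -> is_series (drop_upto u K) (Series u - sum_n u K).
Proof.
  intro Hu.
  set (head := fun k => if (k <=? K)%nat then u k else 0).
  assert (Hhead : is_series head (sum_n u K)).
  { replace (sum_n u K) with (sum_n head K).
    - apply is_series_finite_support.
      intros k Hk; unfold head; destruct (Nat.leb_spec k K); [lia | reflexivity].
    - apply sum_n_ext_loc; intros k Hk; unfold head; destruct (Nat.leb_spec k K); [reflexivity | lia]. }
  generalize (is_series_minus _ _ _ _ (Series_correct _ Hu) Hhead).
  apply is_series_ext; intro k; unfold drop_upto, head, plus, opp; simpl.
  destruct (Nat.leb_spec k K); ring.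
Qed.

Lemma Series_drop_upto (u : nat -> R) (K : nat) :
  ex_series u -> Series (drop_upto u K) = Series u - sum_n u K.
Proof. intro Hu; now apply is_series_unique, is_series_drop_upto. Qed.

Lemma is_lim_seq_Series_sub_sum_n (u : nat -> R) :
  ex_series u -> is_lim_seq (fun K => Series u - sum_n u K) 0.
Proof.
  intro Hu. replace (Finite 0) with (Finite (Series u - Series u)) by (f_equal; ring).
  apply is_lim_seq_minus'; [apply is_lim_seq_const | exact (Series_correct _ Hu)].
Qed.

Lemma Series_sum_n_exchange (f : nat -> nat -> R) (K : nat) :
  (forall k, ex_series (fun n => f n k)) ->
  ex_series (fun n => sum_n (f n) K) /\
  Series (fun n => sum_n (f n) K) = sum_n (fun k => Series (fun n => f n k)) K.
Proof.
  intro Hf. induction K as [|K [IHex IHeq]].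
  - rewrite sum_O. split.
    + eapply ex_series_ext; [|apply (Hf 0%nat)]. intro n; now rewrite sum_O.
    + apply Series_ext; intro n; apply sum_O.
  - assert (Hsplit : forall n, sum_n (f n) K + f n (S K) = sum_n (f n) (S K))
      by (intro n; now rewrite sum_Sn).
    split.
    + eapply ex_series_ext; [exact Hsplit|].
      now apply (ex_series_plus (V := R_NormedModule)).
    + rewrite <- (Series_ext _ _ Hsplit), Series_plus, sum_Sn, IHeq by auto.
      reflexivity.
Qed.

Lemma Series_exchange (f : nat -> nat -> R) (c e : nat -> R) :
  (forall n k, Rabs (f n k) <= c n * e k) -> ex_series c -> ex_series e ->
  ex_series (fun n => Series (fun k => f n k)) /\
  is_series (fun k => Series (fun n => f n k)) (Series (fun n => Series (fun k => f n k))).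
Proof.
  intros Hf Ec Ee.
  assert (Ece : forall n, ex_series (fun k => c n * e k)) by (intro; now apply ex_series_scal).
  assert (Eec : forall k, ex_series (fun n => c n * e k)).
  { intro k. eapply ex_series_ext; [intro; apply Rmult_comm|]. now apply ex_series_scal. }
  assert (Ecol : forall k, ex_series (fun n => f n k))
    by (intro k; apply (ex_series_Rabs_le _ _ (fun n => Hf n k)), Eec).
  assert (Erow : forall n, ex_series (fun k => f n k))
    by (intro n; apply (ex_series_Rabs_le _ _ (Hf n)), Ece).
  assert (Etot : ex_series (fun n => Series (fun k => f n k))).
  { apply (ex_series_Rabs_le _ (fun n => Series e * c n)); [|now apply ex_series_scal].
    intro n. rewrite Rmult_comm, <- Series_scal_l. now apply Series_Rabs_le. }
  split; [exact Etot|].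
  (* the remainder after K columns is bounded by [Series c] times the tail of [e] *)
  enough (H : is_lim_seq (sum_n (fun k => Series (fun n => f n k)))
                         (Series (fun n => Series (fun k => f n k)))) by exact H.
  apply (is_lim_seq_Rabs_sub_le _ (fun K => Series c * (Series e - sum_n e K))).
  - intro K. destruct (Series_sum_n_exchange f K Ecol) as [Efin Hfin].
    rewrite <- Hfin, Rabs_minus_sym, <- Series_minus by auto.
    rewrite (Series_ext _ (fun n => Series (drop_upto (f n) K)))
      by (intro n; now rewrite Series_drop_upto).
    rewrite <- Series_scal_r.
    apply Series_Rabs_le; [|eapply ex_series_ext; [intro; apply Rmult_comm | now apply ex_series_scal]].
    intro n.
    replace (c n * (Series e - sum_n e K)) with (Series (fun k => c n * drop_upto e K k))
      by (now rewrite Series_scal_l, Series_drop_upto).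
    apply Series_Rabs_le.
    + intro k; unfold drop_upto; destruct (k <=? K)%nat; [|apply Hf].
      rewrite Rabs_R0, Rmult_0_r; apply Rle_refl.
    + apply ex_series_scal; eexists; now apply is_series_drop_upto.
  - replace (Finite 0) with (Rbar_mult (Series c) 0) by (simpl; f_equal; ring).
    now apply is_lim_seq_scal_l, is_lim_seq_Series_sub_sum_n.
Qed.

Definition extraction (phi : nat -> nat) : Prop := forall n, (phi n < phi (S n))%nat.

Lemma extraction_lt (phi : nat -> nat) :
  extraction phi -> forall m n, (m < n)%nat -> (phi m < phi n)%nat.
Proof. intros Hphi m n Hmn. induction Hmn; [apply Hphi | specialize (Hphi m0); lia]. Qed.

Lemma extraction_ge_id (phi : nat -> nat) : extraction phi -> forall n, (n <= phi n)%nat.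
Proof. intros Hphi n. induction n; [lia | specialize (Hphi n); lia]. Qed.

Lemma extraction_comp (phi psi : nat -> nat) :
  extraction phi -> extraction psi -> extraction (fun n => phi (psi n)).
Proof. intros Hphi Hpsi n. apply (extraction_lt _ Hphi), Hpsi. Qed.

Lemma cluster_point_extraction (u : nat -> R) (l : R) :
  (forall (eps : posreal) N, exists p, (N < p)%nat /\ Rabs (u p - l) < eps) ->
  exists psi, extraction psi /\ is_lim_seq (fun n => u (psi n)) l.
Proof.
  intro Hcl.
  assert (Hinv : forall j, 0 < / INR (S j)) by (intro; apply Rinv_0_lt_compat, lt_0_INR; lia).
  destruct (functional_choice
              (fun (Nj : nat * nat) p => (fst Nj < p)%nat /\ Rabs (u p - l) < / INR (S (snd Nj))))
    as [g Hg].
  { intros [N j]. exact (Hcl (mkposreal _ (Hinv j)) N). }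
  set (psi := fix psi j := match j with O => g (O, O) | S j' => g (psi j', S j') end).
  exists psi. split; [intro j; exact (proj1 (Hg (psi j, S j)))|].
  apply (is_lim_seq_Rabs_sub_le _ (fun j => / INR (S j))).
  - intro j; apply Rlt_le; destruct j; [exact (proj2 (Hg (O, O))) | exact (proj2 (Hg (psi j, S j)))].
  - apply (is_lim_seq_incr_1 (fun j => / INR j)).
    replace (Finite 0) with (Rbar_inv p_infty) by reflexivity.
    apply is_lim_seq_inv; [apply is_lim_seq_INR | discriminate].
Qed.

Definition bounded_seq (u : nat -> R) : Prop := exists B, forall n, Rabs (u n) <= B.

Lemma bounded_seq_extraction (u : nat -> R) :
  bounded_seq u -> exists psi, extraction psi /\ ex_finite_lim_seq (fun n => u (psi n)).
Proof.
  intros [B HB].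
  destruct (Rtopology.Bolzano_Weierstrass u (fun x => -B <= x <= B)) as [l Hl].
  - apply Rtopology.compact_P3.
  - intro n; apply Rabs_le_between, HB.
  - destruct (cluster_point_extraction u l) as (psi & Hpsi & Hlim).
    + intros eps N. destruct (Hl (fun x => Rabs (x - l) < eps) (S N)) as (p & HNp & Hp).
      * exists eps; intros x Hx; exact Hx.
      * exists p; split; [lia | exact Hp].
    + exists psi; split; [exact Hpsi | now exists l].
Qed.

(* Arbitrary on unbounded sequences: being total, it can be iterated in [nested_extraction]. *)
Definition cvg_extraction (u : nat -> R) : nat -> nat :=
  epsilon (inhabits (fun n => n))
    (fun psi => extraction psi /\ (bounded_seq u -> ex_finite_lim_seq (fun n => u (psi n)))).

Lemma cvg_extraction_spec (u : nat -> R) :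
  extraction (cvg_extraction u) /\
  (bounded_seq u -> ex_finite_lim_seq (fun n => u (cvg_extraction u n))).
Proof.
  unfold cvg_extraction. apply (epsilon_spec _ (fun psi =>
    extraction psi /\ (bounded_seq u -> ex_finite_lim_seq (fun n => u (psi n))))).
  destruct (classic (bounded_seq u)) as [Hu | Hu].
  - destruct (bounded_seq_extraction u Hu) as (psi & Hpsi & Hlim). now exists psi.
  - exists (fun n => n). split; [intro n; lia | intro; contradiction].
Qed.

Fixpoint nested_extraction (w : nat -> nat -> R) (m : nat) : nat -> nat :=
  match m with
  | O => cvg_extraction (w O)
  | S m' => let phi := nested_extraction w m' in
            fun n => phi (cvg_extraction (fun i => w m (phi i)) n)
  end.

Lemma extraction_nested (w : nat -> nat -> R) (m : nat) : extraction (nested_extraction w m).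
Proof.
  induction m as [|m IH]; simpl; [apply cvg_extraction_spec|].
  apply extraction_comp; [exact IH | apply cvg_extraction_spec].
Qed.

Lemma nested_extraction_cvg (w : nat -> nat -> R) (m : nat) :
  bounded_seq (w m) -> ex_finite_lim_seq (fun n => w m (nested_extraction w m n)).
Proof.
  intros [B HB]. destruct m as [|m]; simpl.
  - apply (proj2 (cvg_extraction_spec (w O))). now exists B.
  - apply (proj2 (cvg_extraction_spec (fun i => w (S m) (nested_extraction w m i)))).
    exists B; intro n; apply HB.
Qed.

Lemma nested_extraction_sub (w : nat -> nat -> R) (m p n : nat) :
  exists r, (n <= r)%nat /\ nested_extraction w (p + m) n = nested_extraction w m r.
Proof.
  revert n. induction p as [|p IH]; intro n; [now exists n|].
  set (psi := cvg_extraction (fun i => w (S (p + m)) (nested_extraction w (p + m) i))).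
  destruct (IH (psi n)) as (r & Hr & Heq).
  exists r. split; [|exact Heq].
  pose proof (extraction_ge_id psi (proj1 (cvg_extraction_spec _)) n). lia.
Qed.

Lemma diagonal_extraction (w : nat -> nat -> R) :
  (forall m, bounded_seq (w m)) ->
  exists phi, extraction phi /\ forall m, ex_finite_lim_seq (fun n => w m (phi n)).
Proof.
  intro Hw. exists (fun n => nested_extraction w n n). split.
  - intro n; simpl. apply extraction_lt; [apply extraction_nested|].
    pose proof (extraction_ge_id _ (proj1 (cvg_extraction_spec
      (fun i => w (S n) (nested_extraction w n i)))) (S n)). lia.
  - intro m. destruct (nested_extraction_cvg w m (Hw m)) as [l Hl].
    exists l. apply is_lim_seq_spec. intro eps.
    destruct (proj2 (is_lim_seq_spec _ _) Hl eps) as [N HN].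
    exists (N + m)%nat. intros n Hn.
    replace n with (n - m + m)%nat at 1 by lia.
    destruct (nested_extraction_sub w m (n - m) n) as (r & Hr & ->).
    apply HN. lia.
Qed.

Lemma Rabs_fst_le_Cmod (z : C) : Rabs (fst z) <= Cmod z.
Proof. eapply Rle_trans; [apply Rmax_l | apply Rmax_Cmod]. Qed.

Lemma Rabs_snd_le_Cmod (z : C) : Rabs (snd z) <= Cmod z.
Proof. eapply Rle_trans; [apply Rmax_r | apply Rmax_Cmod]. Qed.

Lemma Cmod_le_Rabs_fst_snd (z : C) : Cmod z <= Rabs (fst z) + Rabs (snd z).
Proof.
  destruct z as [x y]. unfold Cmod; simpl.
  rewrite <- (sqrt_Rsqr (Rabs x + Rabs y)) by (pose proof (Rabs_pos x); pose proof (Rabs_pos y); lra).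
  apply sqrt_le_1_alt. unfold Rsqr.
  pose proof (pow2_abs x); pose proof (pow2_abs y); pose proof (Rabs_pos x); pose proof (Rabs_pos y).
  simpl in *; nra.
Qed.

Lemma Cmod_sub_le (z w : C) : Cmod (z - w) <= Cmod z + Cmod w.
Proof. rewrite <- (Cmod_opp w). apply Cmod_triangle. Qed.

Lemma Cmod_Cseries_le (v : seqC) (g : nat -> R) :
  (forall n, Cmod (v n) <= g n) -> ex_series g -> Cmod (Cseries v) <= 2 * Series g.
Proof.
  intros Hvg Hg.
  destruct (Series_Rabs_le (fun n => fst (v n)) g) as [_ Hfst]; auto.
  { intro n; eapply Rle_trans; [apply Rabs_fst_le_Cmod | apply Hvg]. }
  destruct (Series_Rabs_le (fun n => snd (v n)) g) as [_ Hsnd]; auto.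
  { intro n; eapply Rle_trans; [apply Rabs_snd_le_Cmod | apply Hvg]. }
  eapply Rle_trans; [apply Cmod_le_Rabs_fst_snd|]. unfold Cseries; simpl. lra.
Qed.

Lemma Cseries_finite_support (v : seqC) (N : nat) :
  (forall n, (N < n)%nat -> v n = 0%C) -> Cseries v = sum_n v N.
Proof.
  intro Hv.
  assert (Hproj : forall p : C -> R, p 0%C = 0 -> (forall z w, p (z + w)%C = p z + p w) ->
            Series (fun n => p (v n)) = p (sum_n v N)).
  { intros p Hp0 Hpadd. replace (p (sum_n v N)) with (sum_n (fun n => p (v n)) N).
    - apply is_series_unique, is_series_finite_support. intros n Hn; now rewrite Hv.
    - clear Hv. induction N as [|N IH]; [now rewrite !sum_O|].
      now rewrite !sum_Sn, IH, Hpadd. }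
  unfold Cseries. apply injective_projections; simpl; apply Hproj; reflexivity.
Qed.

Lemma norminf_le (a : seqC) (B : R) : (forall n, Cmod (a n) <= B) -> 0 <= norminf a <= B.
Proof.
  intro HB. unfold norminf.
  assert (Hlow : Rbar_le (Cmod (a 0%nat)) (Sup_seq (fun n => Finite (Cmod (a n)))))
    by (apply (Sup_seq_minor_le _ _ 0%nat); simpl; lra).
  assert (Hup : Rbar_le (Sup_seq (fun n => Finite (Cmod (a n)))) B).
  { apply Rbar_not_lt_le. intro Hlt. apply Sup_seq_minor_lt in Hlt.
    destruct Hlt as [n Hn]. specialize (HB n). simpl in Hn. lra. }
  destruct (Sup_seq (fun n => Finite (Cmod (a n)))); simpl in *; try contradiction.
  pose proof (Cmod_ge_0 (a 0%nat)). lra.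
Qed.

Lemma sum_n_single {G : AbelianMonoid} (i : nat) (x : G) (N : nat) :
  sum_n (fun m => if Nat.eqb i m then x else zero) N = if (i <=? N)%nat then x else zero.
Proof.
  induction N as [|N IH].
  - rewrite sum_O. destruct (Nat.eqb_spec i 0), (Nat.leb_spec i 0); [reflexivity | lia | lia | reflexivity].
  - rewrite sum_Sn, IH.
    destruct (Nat.eqb_spec i (S N)), (Nat.leb_spec i N), (Nat.leb_spec i (S N)); try lia;
      now rewrite ?plus_zero_l, ?plus_zero_r.
Qed.

Definition unit_seq (i : nat) : seqC := fun m => if Nat.eqb i m then 1%C else 0%C.

Lemma norm1_unit_seq (i : nat) : in_l1 (unit_seq i) /\ norm1 (unit_seq i) = 1.
Proof.
  assert (Hcmod : forall m, Cmod (unit_seq i m) = if Nat.eqb i m then 1 else 0).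
  { intro m; unfold unit_seq; destruct (Nat.eqb i m); [apply Cmod_1 | apply Cmod_0]. }
  assert (Hser : is_series (fun m => Cmod (unit_seq i m)) 1).
  { replace 1 with (sum_n (fun m => Cmod (unit_seq i m)) i).
    - apply is_series_finite_support. intros m Hm.
      rewrite Hcmod. destruct (Nat.eqb_spec i m); [lia | reflexivity].
    - rewrite (sum_n_ext _ _ _ Hcmod), (sum_n_single (G := R_AbelianMonoid)).
      now rewrite Nat.leb_refl. }
  split; [now exists 1 | now apply is_series_unique].
Qed.

Lemma sum_n_mul_unit_seq (q : nat -> C) (k N : nat) :
  sum_n (fun n => (q n * unit_seq n k)%C) N = if (k <=? N)%nat then q k else RtoC 0.
Proof.
  rewrite (sum_n_ext _ (fun n => if Nat.eqb k n then q k else zero)).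
  - apply (sum_n_single (G := C_AbelianMonoid)).
  - intro n; unfold unit_seq; rewrite Nat.eqb_sym.
    destruct (Nat.eqb_spec k n) as [->|_]; [apply Cmult_1_r | apply Cmult_0_r].
Qed.

Lemma Cmod_pairing_le (a x : seqC) (b : R) :
  in_l1 a -> (forall m, Cmod (x m) <= b) -> Cmod (pairing a x) <= 2 * norm1 a * b.
Proof.
  intros Ha Hx. unfold pairing, norm1.
  rewrite Rmult_assoc, Rmult_comm with (r1 := Series _), <- Series_scal_l.
  apply Cmod_Cseries_le; [|now apply ex_series_scal].
  intro m. rewrite Cmod_mult, Rmult_comm.
  apply Rmult_le_compat_r; [apply Cmod_ge_0 | apply Hx].
Qed.

Lemma nuclear_l1_dominated_rows (T : seqC -> seqC) (x : nat -> seqC) (B : nat -> R) :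
  (forall n m, Cmod (x n m) <= B n) -> ex_series B ->
  (forall a, in_l1 a -> forall n, T a n = pairing a (x n)) -> nuclear_l1 T.
Proof.
  intros Hx HB HT. exists x, unit_seq.
  split; [intro n; now exists (B n)|].
  split; [intro n; apply norm1_unit_seq|].
  split.
  { apply (ex_series_Rabs_le _ B); [intro n|exact HB].
    rewrite (proj2 (norm1_unit_seq n)), Rmult_1_r.
    destruct (norminf_le (x n) (B n) (Hx n)). rewrite Rabs_pos_eq; lra. }
  intros a Ha.
  assert (HTa : in_l1 (T a)).
  { apply (ex_series_Rabs_le _ (fun k => 2 * norm1 a * B k)); [|now apply ex_series_scal].
    intro k. rewrite Rabs_pos_eq by apply Cmod_ge_0.
    rewrite HT by exact Ha. now apply Cmod_pairing_le. }
  split; [exact HTa|].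
  eapply is_lim_seq_ext; [|apply (is_lim_seq_Series_sub_sum_n _ HTa)].
  intro N. unfold norm1. rewrite <- Series_drop_upto by exact HTa.
  apply Series_ext. intro k. rewrite sum_n_mul_unit_seq. unfold drop_upto.
  destruct (k <=? N)%nat.
  - rewrite <- HT by exact Ha. rewrite (proj1 (Ceq_minus _ _) eq_refl). symmetry; apply Cmod_0.
  - unfold Cminus. now rewrite Copp_0, Cplus_0_r.
Qed.

Lemma eventually_forall_lt (P : nat -> nat -> Prop) (K : nat) :
  (forall k, (k < K)%nat -> eventually (P k)) ->
  eventually (fun n => forall k, (k < K)%nat -> P k n).
Proof.
  induction K as [|K IH]; intro HP; [exists O; intros; lia|].
  generalize (filter_and (F := eventually) _ _ (IH (fun k Hk => HP k ltac:(lia))) (HP K ltac:(lia))).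
  apply (filter_imp (F := eventually)). intros n [Hlt HK] k Hk.
  destruct (Nat.eq_dec k K) as [->|]; [exact HK | apply Hlt; lia].
Qed.

Lemma Rabs_lim_le (u : nat -> R) (l b : R) :
  is_lim_seq u l -> (forall n, Rabs (u n) <= b) -> Rabs l <= b.
Proof.
  intros Hu Hb. apply is_lim_seq_abs in Hu.
  exact (is_lim_seq_le _ _ _ _ Hb Hu (is_lim_seq_const b)).
Qed.

Lemma ex_finite_lim_seq_extraction (u : nat -> R) (psi : nat -> nat) :
  extraction psi -> ex_finite_lim_seq u -> ex_finite_lim_seq (fun n => u (psi n)).
Proof.
  intros Hpsi [l Hl]. exists l.
  apply is_lim_seq_subseq; [now apply eventually_subseq | exact Hl].
Qed.

Lemma bounded_coordinates_extraction (c : nat -> seqC) (t : nat -> R) :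
  (forall j k, Cmod (c j k) <= t k) ->
  exists phi L, extraction phi /\ (forall k, Cmod (L k) <= 2 * t k) /\
    forall k, is_lim_seq (fun j => fst (c (phi j) k)) (fst (L k)) /\
              is_lim_seq (fun j => snd (c (phi j) k)) (snd (L k)).
Proof.
  intro Hc.
  assert (Hfst : forall j k, Rabs (fst (c j k)) <= t k)
    by (intros; eapply Rle_trans; [apply Rabs_fst_le_Cmod | apply Hc]).
  assert (Hsnd : forall j k, Rabs (snd (c j k)) <= t k)
    by (intros; eapply Rle_trans; [apply Rabs_snd_le_Cmod | apply Hc]).
  destruct (diagonal_extraction (fun k j => fst (c j k))) as (phi1 & Hphi1 & Hlim1).
  { intro k; exists (t k); intro j; apply Hfst. }
  destruct (diagonal_extraction (fun k j => snd (c (phi1 j) k))) as (phi2 & Hphi2 & Hlim2).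
  { intro k; exists (t k); intro j; apply Hsnd. }
  set (phi := fun j => phi1 (phi2 j)).
  set (L := fun k => (real (Lim_seq (fun j => fst (c (phi j) k))),
                      real (Lim_seq (fun j => snd (c (phi j) k)))) : C).
  assert (HLfst : forall k, is_lim_seq (fun j => fst (c (phi j) k)) (fst (L k))).
  { intro k. apply Lim_seq_correct'.
    exact (ex_finite_lim_seq_extraction (fun j => fst (c (phi1 j) k)) _ Hphi2 (Hlim1 k)). }
  assert (HLsnd : forall k, is_lim_seq (fun j => snd (c (phi j) k)) (snd (L k)))
    by (intro k; apply Lim_seq_correct', Hlim2).
  exists phi, L. split; [exact (extraction_comp _ _ Hphi1 Hphi2)|]. split; [|auto].
  intro k. eapply Rle_trans; [apply Cmod_le_Rabs_fst_snd|].
  pose proof (Rabs_lim_le _ _ _ (HLfst k) (fun j => Hfst (phi j) k)).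
  pose proof (Rabs_lim_le _ _ _ (HLsnd k) (fun j => Hsnd (phi j) k)). lra.
Qed.

Lemma box_c0_extraction (c : nat -> seqC) (t : nat -> R) :
  (forall j k, Cmod (c j k) <= t k) -> is_lim_seq t 0 ->
  exists phi, extraction phi /\ exists L, in_linf L /\
    is_lim_seq (fun j => norminf (fun k => (c (phi j) k - L k)%C)) 0.
Proof.
  intros Hc Ht.
  destruct (bounded_coordinates_extraction c t Hc) as (phi & L & Hphi & HL & HlimL).
  exists phi. split; [exact Hphi|]. exists L. split.
  { destruct (filterlim_bounded (V := R_NormedModule) t) as [M HM]; [now exists 0|].
    exists (2 * M). intro k. eapply Rle_trans; [apply HL|].
    pose proof (HM k) as HMk; change (Rabs (t k) <= M) in HMk. pose proof (Rle_abs (t k)). lra. }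
  apply is_lim_seq_spec. intro eps.
  assert (Heps : 0 < eps / 6) by (pose proof (cond_pos eps); lra).
  destruct (proj2 (is_lim_seq_spec _ _) Ht (mkposreal _ Heps)) as [K HK].
  (* finitely many coordinates converge uniformly, the others are small by the box constraint *)
  assert (Hhead : eventually (fun j => forall k, (k < K)%nat ->
            Rabs (fst (c (phi j) k) - fst (L k)) < eps / 4 /\
            Rabs (snd (c (phi j) k) - snd (L k)) < eps / 4)).
  { apply eventually_forall_lt. intros k _.
    assert (Heps4 : 0 < eps / 4) by (pose proof (cond_pos eps); lra).
    apply (filter_and (F := eventually)).
    - exact (proj2 (is_lim_seq_spec _ _) (proj1 (HlimL k)) (mkposreal _ Heps4)).
    - exact (proj2 (is_lim_seq_spec _ _) (proj2 (HlimL k)) (mkposreal _ Heps4)). }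
  revert Hhead. apply (filter_imp (F := eventually)). intros j Hj.
  destruct (norminf_le (fun k => (c (phi j) k - L k)%C) (eps / 2)) as [Hnorm0 Hnorm].
  { intro k. destruct (Nat.lt_ge_cases k K) as [Hk | Hk].
    - eapply Rle_trans; [apply Cmod_le_Rabs_fst_snd|].
      destruct (Hj k Hk). simpl in *; unfold Rminus in *; lra.
    - eapply Rle_trans; [apply Cmod_sub_le|].
      specialize (HK k Hk). simpl in HK. rewrite Rminus_0_r in HK.
      pose proof (Rle_abs (t k)); pose proof (Hc (phi j) k); pose proof (HL k). lra. }
  rewrite Rminus_0_r, Rabs_pos_eq by exact Hnorm0.
  pose proof (cond_pos eps). lra.
Qed.

Section HankelCesaro.

Variable mu : nat -> R.
Hypothesis mu_ge0 : forall n, 0 <= mu n.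
Hypothesis mu_nonincr : forall n, mu (S n) <= mu n.
Hypothesis mu_summable : ex_series mu.

Lemma mu_add_le (n k : nat) : mu (n + k) <= mu k.
Proof.
  induction n as [|n IH]; [apply Rle_refl|].
  eapply Rle_trans; [apply mu_nonincr | exact IH].
Qed.

Lemma ex_series_mu_shift (k : nat) : ex_series (fun n => mu (n + k)).
Proof.
  apply (ex_series_Rabs_le _ mu); [|exact mu_summable]. intro n.
  rewrite Rabs_pos_eq, Nat.add_comm by apply mu_ge0. apply mu_add_le.
Qed.

Lemma Series_mu_shift_le (k : nat) : Series (fun n => mu (n + k)) <= Series mu.
Proof.
  apply Series_le; [|exact mu_summable]. intro n.
  split; [apply mu_ge0|]. rewrite Nat.add_comm. apply mu_add_le.
Qed.

Lemma is_lim_seq_Series_mu_shift : is_lim_seq (fun k => Series (fun n => mu (n + k))) 0.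
Proof.
  apply (is_lim_seq_incr_1 (fun k => Series (fun n => mu (n + k)))).
  eapply is_lim_seq_ext; [|apply (is_lim_seq_Series_sub_sum_n _ mu_summable)].
  intro K. rewrite (Series_incr_n mu (S K)), sum_n_Reals by (lia || exact mu_summable).
  simpl (Init.Nat.pred (S K)).
  rewrite (Series_ext (fun n => mu (S K + n)) (fun n => mu (n + S K))) by (intro; f_equal; lia).
  ring.
Qed.

Lemma Hmu_nuclear : nuclear_l1 (Hmu mu).
Proof.
  apply (nuclear_l1_dominated_rows _ (fun k n => RtoC (mu (n + k))) mu); [|exact mu_summable|].
  - intros k n. rewrite Cmod_R, Rabs_pos_eq by apply mu_ge0. apply mu_add_le.
  - intros a _ k. unfold Hmu, pairing. f_equal.
    apply functional_extensionality; intro n. apply Cmult_comm.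
Qed.

Lemma Cesmu_nuclear : nuclear_l1 (Cesmu mu).
Proof.
  apply (nuclear_l1_dominated_rows _
           (fun k n => if (n <=? k)%nat then RtoC (mu k) else RtoC 0) mu); [|exact mu_summable|].
  - intros k n. destruct (n <=? k)%nat.
    + rewrite Cmod_R, Rabs_pos_eq by apply mu_ge0. apply Rle_refl.
    + rewrite Cmod_0. apply mu_ge0.
  - intros a _ k. unfold Cesmu, pairing. rewrite (Cseries_finite_support _ k).
    + rewrite <- (sum_n_mult_l (K := C_Ring)). apply sum_n_ext_loc. intros n Hn.
      destruct (Nat.leb_spec n k); [|lia]. apply Cmult_comm.
    + intros n Hn. destruct (Nat.leb_spec n k); [lia|]. apply Cmult_0_r.
Qed.

Definition hankel (alpha : nat -> R) (k : nat) : R := Series (fun n => mu (n + k) * alpha n).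

Lemma hankel_pairing_comm (alpha beta : nat -> R) (M : R) :
  ex_series (fun n => Rabs (alpha n)) -> (forall k, Rabs (beta k) <= M) ->
  ex_series (fun k => hankel alpha k * beta k) /\
  ex_series (fun n => alpha n * hankel beta n) /\
  Series (fun k => hankel alpha k * beta k) = Series (fun n => alpha n * hankel beta n).
Proof.
  intros Halpha Hbeta.
  destruct (Series_exchange (fun n k => mu (n + k) * alpha n * beta k)
              (fun n => M * Rabs (alpha n)) mu) as [Erow Hcomm];
    [| now apply ex_series_scal | exact mu_summable |].
  { intros n k. rewrite !Rabs_mult, (Rabs_pos_eq (mu (n + k))) by apply mu_ge0.
    assert (Hmb : mu (n + k) * Rabs (beta k) <= mu k * M)
      by (apply Rmult_le_compat; [apply mu_ge0 | apply Rabs_pos | apply mu_add_le | apply Hbeta]).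
    replace (mu (n + k) * Rabs (alpha n) * Rabs (beta k))
      with (Rabs (alpha n) * (mu (n + k) * Rabs (beta k))) by ring.
    replace (M * Rabs (alpha n) * mu k) with (Rabs (alpha n) * (mu k * M)) by ring.
    apply Rmult_le_compat_l; [apply Rabs_pos | exact Hmb]. }
  assert (Hcol : forall k, hankel alpha k * beta k = Series (fun n => mu (n + k) * alpha n * beta k))
    by (intro k; unfold hankel; now rewrite Series_scal_r).
  assert (Hrow : forall n, alpha n * hankel beta n = Series (fun k => mu (n + k) * alpha n * beta k)).
  { intro n. unfold hankel. rewrite <- Series_scal_l.
    apply Series_ext; intro k. rewrite Nat.add_comm. ring. }
  rewrite (Series_ext _ _ Hcol), (Series_ext _ _ Hrow).
  split; [|split].
  - eapply ex_series_ext; [intro k; symmetry; apply Hcol | eexists; exact Hcomm].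
  - eapply ex_series_ext; [intro n; symmetry; apply Hrow | exact Erow].
  - now apply is_series_unique.
Qed.

Lemma Hmu_fst (a : seqC) (k : nat) : fst (Hmu mu a k) = hankel (fun n => fst (a n)) k.
Proof. unfold Hmu, Cseries, hankel; simpl. apply Series_ext; intro n; simpl; ring. Qed.

Lemma Hmu_snd (a : seqC) (k : nat) : snd (Hmu mu a k) = hankel (fun n => snd (a n)) k.
Proof. unfold Hmu, Cseries, hankel; simpl. apply Series_ext; intro n; simpl; ring. Qed.

Lemma Cmod_Hmu_le (b : seqC) (M : R) :
  (forall n, Cmod (b n) <= M) -> forall k, Cmod (Hmu mu b k) <= 2 * M * Series (fun n => mu (n + k)).
Proof.
  intros Hb k. unfold Hmu. rewrite Rmult_assoc, <- Series_scal_l.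
  apply Cmod_Cseries_le; [|now apply ex_series_scal, ex_series_mu_shift].
  intro n. rewrite Cmod_mult, Cmod_R, Rabs_pos_eq, Rmult_comm by apply mu_ge0.
  apply Rmult_le_compat_r; [apply mu_ge0 | apply Hb].
Qed.

Lemma Hmu_in_linf (b : seqC) : in_linf b -> in_linf (Hmu mu b).
Proof.
  intros [M HM]. exists (2 * M * Series mu). intro k.
  eapply Rle_trans; [now apply Cmod_Hmu_le|].
  apply Rmult_le_compat_l; [|apply Series_mu_shift_le].
  pose proof (Cmod_ge_0 (b O)); pose proof (HM O); lra.
Qed.

Lemma Hmu_adjoint : adjoint_l1_linf (Hmu mu) (Hmu mu).
Proof.
  split; [exact Hmu_in_linf|].
  intros a b Ha [M HM].
  assert (Ha1 : ex_series (fun n => Rabs (fst (a n))))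
    by (apply (ex_series_Rabs_le _ _ (fun n => ltac:(rewrite Rabs_Rabsolu; apply Rabs_fst_le_Cmod)) Ha)).
  assert (Ha2 : ex_series (fun n => Rabs (snd (a n))))
    by (apply (ex_series_Rabs_le _ _ (fun n => ltac:(rewrite Rabs_Rabsolu; apply Rabs_snd_le_Cmod)) Ha)).
  assert (Hb1 : forall k, Rabs (fst (b k)) <= M)
    by (intro k; eapply Rle_trans; [apply Rabs_fst_le_Cmod | apply HM]).
  assert (Hb2 : forall k, Rabs (snd (b k)) <= M)
    by (intro k; eapply Rle_trans; [apply Rabs_snd_le_Cmod | apply HM]).
  destruct (hankel_pairing_comm _ _ _ Ha1 Hb1) as (E11 & F11 & G11).
  destruct (hankel_pairing_comm _ _ _ Ha1 Hb2) as (E12 & F12 & G12).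
  destruct (hankel_pairing_comm _ _ _ Ha2 Hb1) as (E21 & F21 & G21).
  destruct (hankel_pairing_comm _ _ _ Ha2 Hb2) as (E22 & F22 & G22).
  unfold pairing, Cseries. f_equal.
  - rewrite (Series_ext _ (fun k => hankel (fun n => fst (a n)) k * fst (b k)
                                  - hankel (fun n => snd (a n)) k * snd (b k)))
      by (intro k; unfold Cmult; cbn [fst snd]; now rewrite Hmu_fst, Hmu_snd).
    rewrite (Series_ext (fun n => fst (a n * Hmu mu b n)%C)
               (fun n => fst (a n) * hankel (fun k => fst (b k)) n
                         - snd (a n) * hankel (fun k => snd (b k)) n))
      by (intro n; unfold Cmult; cbn [fst snd]; now rewrite Hmu_fst, Hmu_snd).
    rewrite !Series_minus by assumption. congruence.
  - rewrite (Series_ext _ (fun k => hankel (fun n => fst (a n)) k * snd (b k)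
                                  + hankel (fun n => snd (a n)) k * fst (b k)))
      by (intro k; unfold Cmult; cbn [fst snd]; now rewrite Hmu_fst, Hmu_snd).
    rewrite (Series_ext (fun n => snd (a n * Hmu mu b n)%C)
               (fun n => fst (a n) * hankel (fun k => snd (b k)) n
                         + snd (a n) * hankel (fun k => fst (b k)) n))
      by (intro n; unfold Cmult; cbn [fst snd]; now rewrite Hmu_fst, Hmu_snd).
    rewrite !Series_plus by assumption. congruence.
Qed.

Lemma Hmu_compact : compact_linf (Hmu mu).
Proof.
  split; [exact Hmu_in_linf|].
  intros b M Hb.
  apply (box_c0_extraction (fun j => Hmu mu (b j)) (fun k => 2 * M * Series (fun n => mu (n + k)))).
  - intros j k. now apply Cmod_Hmu_le.
  - replace (Finite 0) with (Rbar_mult (2 * M) 0) by (simpl; f_equal; ring).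
    apply is_lim_seq_scal_l, is_lim_seq_Series_mu_shift.
Qed.

End HankelCesaro.

Theorem proposition29 (mu : nat -> R) :
  (forall n, 0 < mu n)%R ->
  (forall n, mu (S n) <= mu n)%R ->
  ex_series mu ->
  nuclear_l1 (Hmu mu) /\ nuclear_l1 (Cesmu mu) /\
  adjoint_l1_linf (Hmu mu) (Hmu mu) /\ compact_linf (Hmu mu).
Proof.
  intros Hpos Hnonincr Hsum.
  assert (Hge0 : forall n, 0 <= mu n) by (intro n; now apply Rlt_le).
  split; [now apply Hmu_nuclear|].
  split; [now apply Cesmu_nuclear|].
  split; [now apply Hmu_adjoint | now apply Hmu_compact].
Qed.
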